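(* Let $G\ne1$ be a finitely generated group in $\mathrm{Q}(\mathrm{PLO})$. Then there exists a normal subgroup $H\ne 1$ of $G$ such that whenever $A,B$ are finitely generated subgroups of $H$, there exists $g\in G$ such that $A^g$ and $B$ centralize each other.
   Context: $\mathrm{PLO}$ is the class of groups isomorphic to a subgroup of $\mathcal{P}$, the group of piecewise linear orientation preserving self-homeomorphisms of $[0,1]$. $\mathrm{Q}(\mathrm{PLO})$ is the class of groups isomorphic to a quotient of a $\mathrm{PLO}$-group. $A^g=gAg^{-1}$. *)

From Stdlib Require Import Reals List.
Open Scope R_scope.

Record Grp : Type := {
  carrier :> Type;
  gmul : carrier -> carrier -> carrier;
  ginv : carrier -> carrier;
  gone : carrier;
  gmul_assoc : forall a b c, gmul a (gmul b c) = gmul (gmul a b) c;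
  gmul_1l : forall a, gmul gone a = a;
  gmul_1r : forall a, gmul a gone = a;
  gmul_Vl : forall a, gmul (ginv a) a = gone;
  gmul_Vr : forall a, gmul a (ginv a) = gone
}.
Arguments gmul {_} _ _.
Arguments ginv {_} _.
Arguments gone {_}.

Definition is_subgroup (G : Grp) (S : G -> Prop) : Prop :=
  S gone /\ (forall a b, S a -> S b -> S (gmul a b)) /\ (forall a, S a -> S (ginv a)).

Definition in_gen (G : Grp) (X : G -> Prop) (g : G) : Prop :=
  forall S, is_subgroup G S -> (forall x, X x -> S x) -> S g.

Definition fin_gen_group (G : Grp) : Prop :=
  exists l : list G, forall g : G, in_gen G (fun x => In x l) g.

Definition fin_gen_subgroup (G : Grp) (A : G -> Prop) : Prop :=
  exists l : list G, forall g : G, A g <-> in_gen G (fun x => In x l) g.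

Definition is_normal (G : Grp) (H : G -> Prop) : Prop :=
  is_subgroup G H /\ forall g h, H h -> H (gmul (gmul g h) (ginv g)).

Definition is_hom (G K : Grp) (f : G -> K) : Prop :=
  forall a b, f (gmul a b) = gmul (f a) (f b).

(** Elements of P: piecewise linear orientation preserving homeomorphisms
    of [0,1] (only the values on [0,1] are relevant). *)
Definition PL_homeo01 (f : R -> R) : Prop :=
  f 0 = 0 /\ f 1 = 1 /\
  (forall x y, 0 <= x -> x < y -> y <= 1 -> f x < f y) /\
  exists (n : nat) (t : nat -> R),
    t O = 0 /\ t n = 1 /\ (forall i, (i < n)%nat -> t i < t (S i)) /\
    (forall i, (i < n)%nat -> exists a b : R,
        forall x, t i <= x <= t (S i) -> f x = a * x + b).

(** K is in PLO: an injective homomorphism of K into P (group law of P is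
    composition; maps are compared on [0,1]). *)
Definition PLO_embedding (K : Grp) (iota : K -> R -> R) : Prop :=
  (forall k, PL_homeo01 (iota k)) /\
  (forall a b x, 0 <= x <= 1 -> iota (gmul a b) x = iota a (iota b x)) /\
  (forall a b, (forall x, 0 <= x <= 1 -> iota a x = iota b x) -> a = b).

Definition in_PLO (K : Grp) : Prop := exists iota, PLO_embedding K iota.

(** G in Q(PLO): G is a quotient (surjective homomorphic image) of a PLO group. *)
Definition in_QPLO (G : Grp) : Prop :=
  exists (K : Grp) (pi : K -> G),
    in_PLO K /\ is_hom K G pi /\ (forall g, exists k, pi k = g).

Definition conj_centralize (G : Grp) (g : G) (A B : G -> Prop) : Prop :=
  forall a b, A a -> B b ->
    gmul (gmul (gmul g a) (ginv g)) b = gmul b (gmul (gmul g a) (ginv g)).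

(* Let G be the image of K <= P.  The global fixed points of K cut [0,1] into components.
   At a global fixed point every element of K is, on each side, a dilation, and the ratio of
   the dilation is multiplicative; so commutators are trivial near the ends of every component,
   i.e. their supports are compact in each component.  Among elements of K with this property,
   supported in finitely many components and with nontrivial image in G, pick one using the
   fewest components, say those of p :: P; the images H of all such elements supported in the
   components of p :: P form a nontrivial normal subgroup.  Finitely many elements of H have
   lifts whose supports meet the component of p inside a compact [c, d]; as that component
   contains no global fixed point, some g moves c beyond d.  Then a^g and b have disjoint
   supports in the component of p, so [a^g, b] is supported in the components of P and
   therefore has trivial image. *)

From Stdlib Require Import Reals List Lra Lia Classical Wf_nat.
Open Scope R_scope.

Section GroupFacts.
Variable G : Grp.
Implicit Types g x y z : G.

Lemma gmul_cancel_r x y z : gmul x z = gmul y z -> x = y.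
Proof.
  intro H. rewrite <- (gmul_1r _ x), <- (gmul_1r _ y), <- (gmul_Vr _ z), !gmul_assoc, H.
  reflexivity.
Qed.

Lemma ginv_unique x y : gmul y x = gone -> y = ginv x.
Proof. intro H. apply (gmul_cancel_r _ _ x). now rewrite H, gmul_Vl. Qed.

Lemma ginv_involutive x : ginv (ginv x) = x.
Proof. symmetry. apply ginv_unique, gmul_Vr. Qed.

Lemma ginv_mul x y : ginv (gmul x y) = gmul (ginv y) (ginv x).
Proof.
  symmetry. apply ginv_unique.
  now rewrite <- !gmul_assoc, (gmul_assoc _ (ginv x) x y), gmul_Vl, gmul_1l, gmul_Vl.
Qed.

Definition gconj g x := gmul (gmul g x) (ginv g).
Definition gcomm x y := gmul (gmul (gmul x y) (ginv x)) (ginv y).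
Definition commute x y := gmul x y = gmul y x.

Lemma gconj_mul g x y : gconj g (gmul x y) = gmul (gconj g x) (gconj g y).
Proof.
  unfold gconj. rewrite !gmul_assoc, <- (gmul_assoc _ (gmul g x) (ginv g) g), gmul_Vl, gmul_1r.
  reflexivity.
Qed.

Lemma gconj_inv g x : gconj g (ginv x) = ginv (gconj g x).
Proof. unfold gconj. now rewrite !ginv_mul, ginv_involutive, gmul_assoc. Qed.

Lemma gconj_one g : gconj g gone = gone.
Proof. unfold gconj. now rewrite gmul_1r, gmul_Vr. Qed.

Lemma commute_of_gcomm x y : gcomm x y = gone -> commute x y.
Proof.
  intro H. apply ginv_unique in H. rewrite ginv_involutive in H.
  apply (gmul_cancel_r _ _ (ginv x)). unfold commute.
  now rewrite H, <- gmul_assoc, gmul_Vr, gmul_1r.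
Qed.

Lemma is_subgroup_centralizer x : is_subgroup G (commute x).
Proof.
  unfold commute. repeat split.
  - now rewrite gmul_1l, gmul_1r.
  - intros a b Ha Hb. now rewrite gmul_assoc, Ha, <- gmul_assoc, Hb, gmul_assoc.
  - intros a Ha. apply (gmul_cancel_r _ _ a).
    now rewrite <- !gmul_assoc, gmul_Vl, gmul_1r, Ha, gmul_assoc, gmul_Vl, gmul_1l.
Qed.

Lemma is_subgroup_gconj_preimage g (S : G -> Prop) :
  is_subgroup G S -> is_subgroup G (fun x => S (gconj g x)).
Proof.
  intros [S1 [SM SV]]. repeat split.
  - now rewrite gconj_one.
  - intros a b Ha Hb. rewrite gconj_mul. auto.
  - intros a Ha. rewrite gconj_inv. auto.
Qed.

Lemma is_subgroup_gcomm (S : G -> Prop) x y : is_subgroup G S -> S x -> S y -> S (gcomm x y).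
Proof. intros [_ [SM SV]] Hx Hy. unfold gcomm. auto. Qed.

Lemma conj_centralize_of_generators g (lA lB : list G) (A B : G -> Prop) :
  (forall a, A a <-> in_gen G (fun x => In x lA) a) ->
  (forall b, B b <-> in_gen G (fun x => In x lB) b) ->
  (forall a b, In a lA -> In b lB -> commute (gconj g a) b) ->
  conj_centralize G g A B.
Proof.
  intros HA HB Hgen a b Ha Hb. apply HA in Ha. apply HB in Hb.
  apply (Hb (commute (gconj g a))); [apply is_subgroup_centralizer|].
  intros y Hy. symmetry.
  apply (Ha (fun x => commute y (gconj g x))).
  - apply is_subgroup_gconj_preimage, is_subgroup_centralizer.
  - intros x Hx. symmetry. now apply Hgen.
Qed.

End GroupFacts.

Section Homomorphisms.
Variables (K G : Grp) (f : K -> G).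
Hypothesis Hf : is_hom K G f.

Lemma hom_one : f gone = gone.
Proof. apply (gmul_cancel_r G _ _ (f gone)). now rewrite <- Hf, !gmul_1l. Qed.

Lemma hom_inv k : f (ginv k) = ginv (f k).
Proof. apply ginv_unique. rewrite <- Hf, gmul_Vl. apply hom_one. Qed.

Lemma hom_gconj g k : f (gconj K g k) = gconj G (f g) (f k).
Proof. unfold gconj. now rewrite !Hf, hom_inv. Qed.

Lemma hom_gcomm k h : f (gcomm K k h) = gcomm G (f k) (f h).
Proof. unfold gcomm. now rewrite !Hf, !hom_inv. Qed.

Definition image (S : K -> Prop) (z : G) := exists k, S k /\ f k = z.

Lemma is_normal_image (S : K -> Prop) :
  (forall z, exists k, f k = z) -> is_normal K S -> is_normal G (image S).
Proof.
  intros Hsurj [[S1 [SM SV]] SN]. repeat split.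
  - exists gone. split; [exact S1 | apply hom_one].
  - intros _ _ [a [Ha <-]] [b [Hb <-]]. exists (gmul a b). auto.
  - intros _ [a [Ha <-]]. exists (ginv a). split; [auto | apply hom_inv].
  - intros z _ [h [Hh <-]]. destruct (Hsurj z) as [g <-].
    exists (gconj K g h). split; [now apply SN | apply hom_gconj].
Qed.

Lemma image_list (S : K -> Prop) (l : list G) :
  (forall z, In z l -> image S z) ->
  exists ks, (forall k, In k ks -> S k) /\ forall z, In z l -> exists k, In k ks /\ f k = z.
Proof.
  induction l as [|z l IH]; intros Hl.
  - exists nil. split; intros _ [].
  - destruct (Hl z (or_introl eq_refl)) as [k [Hk Hkz]].
    destruct IH as [ks [Hks Hlift]]; [intros; apply Hl; now right|].
    exists (k :: ks). split.
    + intros k' [<-|Hk']; auto.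
    + intros z' [<-|Hz']; [exists k; simpl; auto|].
      destruct (Hlift z' Hz') as [k' [Hk' Hz'k]]. exists k'. simpl. auto.
Qed.

End Homomorphisms.

Lemma exists_crossing (Q : nat -> Prop) n : ~ Q O -> Q n -> exists i, (i < n)%nat /\ ~ Q i /\ Q (S i).
Proof.
  intros H0. induction n as [|n IH]; intros Hn; [contradiction|].
  destruct (classic (Q n)) as [Hq|Hq].
  - destruct (IH Hq) as [i [Hi Hcross]]. exists i. split; [lia | exact Hcross].
  - exists n. auto.
Qed.

Section Partitions.
Variables (n : nat) (t : nat -> R).
Hypotheses (t_0 : t O = 0) (t_n : t n = 1).

Lemma partition_piece_right x : 0 <= x < 1 -> exists i, (i < n)%nat /\ t i <= x < t (S i).
Proof.
  intros Hx. destruct (exists_crossing (fun j => x < t j) n) as [i [Hi [Hle Hlt]]]; try lra.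
  exists i. split; [exact Hi | lra].
Qed.

Lemma partition_piece_left x : 0 < x <= 1 -> exists i, (i < n)%nat /\ t i < x <= t (S i).
Proof.
  intros Hx. destruct (exists_crossing (fun j => x <= t j) n) as [i [Hi [Hle Hlt]]]; try lra.
  exists i. split; [exact Hi | lra].
Qed.

End Partitions.

Lemma exists_lub (S : R -> Prop) m :
  (exists y, S y) -> (forall y, S y -> y <= m) ->
  exists b, b <= m /\ (forall y, S y -> y <= b) /\ (forall c, c < b -> exists y, S y /\ c < y).
Proof.
  intros Hne Hm. destruct (completeness S) as [b [Hub Hlub]]; [now exists m | exact Hne |].
  exists b. repeat split; [now apply Hlub | exact Hub |].
  intros c Hc. apply NNPP. intro Hno.
  assert (b <= c); [|lra].
  apply Hlub. intros y Hy. apply Rnot_lt_le. intro. apply Hno. now exists y.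
Qed.

Lemma exists_glb (S : R -> Prop) m :
  (exists y, S y) -> (forall y, S y -> m <= y) ->
  exists a, m <= a /\ (forall y, S y -> a <= y) /\ (forall c, a < c -> exists y, S y /\ y < c).
Proof.
  intros [y0 Hy0] Hm.
  destruct (exists_lub (fun w => S (- w)) (- m)) as [b [Hbm [Hub Happ]]].
  - exists (- y0). now rewrite Ropp_involutive.
  - intros w Hw. specialize (Hm _ Hw). lra.
  - exists (- b). repeat split; [lra | |].
    + intros y Hy. assert (- y <= b) by (apply Hub; now rewrite Ropp_involutive). lra.
    + intros c Hc. destruct (Happ (- c)) as [w [Hw Hcw]]; [lra|].
      exists (- w). split; [exact Hw | lra].
Qed.

Lemma affine_fixed_between al be u x v :
  al * u + be = u -> al * v + be = v -> u <= x <= v -> al * x + be = x.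
Proof.
  intros Hu Hv Hx. destruct (Req_dec u v) as [<-|Huv]; [replace x with u by lra; exact Hu|].
  assert (Hprod : (al - 1) * (v - u) = 0) by lra.
  apply Rmult_integral in Hprod as [Hal|]; [|lra].
  replace al with 1 in * by lra. lra.
Qed.

Lemma PL_affine_right f a :
  PL_homeo01 f -> 0 <= a < 1 ->
  exists r al be, a < r <= 1 /\ 0 < al /\ forall x, a <= x <= r -> f x = al * x + be.
Proof.
  intros [_ [_ [Hmono [n [t [t_0 [t_n [t_incr Haff]]]]]]]] Ha.
  destruct (partition_piece_right n t t_0 t_n a Ha) as [i [Hi Hti]].
  destruct (Haff i Hi) as [al [be Hf]].
  set (r := Rmin (t (S i)) 1).
  assert (Hr : a < r <= 1) by (split; [apply Rmin_glb_lt | apply Rmin_r]; lra).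
  assert (Hrt : r <= t (S i)) by apply Rmin_l.
  exists r, al, be. split; [exact Hr|split; [|intros; apply Hf; lra]].
  pose proof (Hmono a r ltac:(lra) ltac:(lra) ltac:(lra)).
  rewrite !Hf in H by lra. nra.
Qed.

Lemma PL_affine_left f a :
  PL_homeo01 f -> 0 < a <= 1 ->
  exists l al be, 0 <= l < a /\ 0 < al /\ forall x, l <= x <= a -> f x = al * x + be.
Proof.
  intros [_ [_ [Hmono [n [t [t_0 [t_n [t_incr Haff]]]]]]]] Ha.
  destruct (partition_piece_left n t t_0 t_n a Ha) as [i [Hi Hti]].
  destruct (Haff i Hi) as [al [be Hf]].
  set (l := Rmax (t i) 0).
  assert (Hl : 0 <= l < a) by (split; [apply Rmax_r | apply Rmax_lub_lt]; lra).
  assert (Hlt : t i <= l) by apply Rmax_l.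
  exists l, al, be. split; [exact Hl|split; [|intros; apply Hf; lra]].
  pose proof (Hmono l a ltac:(lra) ltac:(lra) ltac:(lra)).
  rewrite !Hf in H by lra. nra.
Qed.

Lemma PL_support_cover f :
  PL_homeo01 f ->
  exists P : list R, forall x, 0 <= x <= 1 -> f x <> x ->
    exists p, In p P /\
      ((p <= x /\ forall z, p <= z <= x -> f z <> z) \/
       (x <= p /\ forall z, x <= z <= p -> f z <> z)).
Proof.
  intros [_ [_ [_ [n [t [t_0 [t_n [t_incr Haff]]]]]]]].
  exists (map t (seq 0 (S n))). intros x Hx Hfx.
  assert (Hin : forall j, (j <= n)%nat -> In (t j) (map t (seq 0 (S n))))
    by (intros j Hj; apply in_map, in_seq; lia).
  assert (Hpiece : exists i, (i < n)%nat /\ t i <= x <= t (S i)).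
  { destruct (Rlt_dec x 1).
    - destruct (partition_piece_right n t t_0 t_n x) as [i [Hi Hti]]; [lra|].
      exists i. split; [exact Hi | lra].
    - destruct (partition_piece_left n t t_0 t_n x) as [i [Hi Hti]]; [lra|].
      exists i. split; [exact Hi | lra]. }
  destruct Hpiece as [i [Hi Hti]]. destruct (Haff i Hi) as [al [be Hf]].
  destruct (classic (exists u, t i <= u <= x /\ f u = u)) as [[u [Hu Hfu]] | Hleft].
  - (* an affine map fixing points on both sides of x would fix x *)
    exists (t (S i)). split; [apply Hin; lia|]. right. split; [lra|]. intros z Hz Hfz.
    apply Hfx. rewrite Hf in Hfu, Hfz |- * by lra.
    now apply (affine_fixed_between al be u x z).
  - exists (t i). split; [apply Hin; lia|]. left. split; [lra|]. intros z Hz Hfz.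
    apply Hleft. exists z. split; [lra | exact Hfz].
Qed.

Section PLGroup.
Variables (K : Grp) (iota : K -> R -> R).
Hypothesis HE : PLO_embedding K iota.
Implicit Types (g h k : K) (p x y z : R).

Lemma iota_PL k : PL_homeo01 (iota k).
Proof. apply HE. Qed.

Lemma iota_mul g h x : 0 <= x <= 1 -> iota (gmul g h) x = iota g (iota h x).
Proof. apply HE. Qed.

Lemma iota_ext g h : (forall x, 0 <= x <= 1 -> iota g x = iota h x) -> g = h.
Proof. apply HE. Qed.

Lemma iota_lt k x y : 0 <= x -> x < y -> y <= 1 -> iota k x < iota k y.
Proof. apply iota_PL. Qed.

Lemma iota_le k x y : 0 <= x -> x <= y -> y <= 1 -> iota k x <= iota k y.
Proof.
  intros Hx Hxy Hy. destruct (Req_dec x y) as [<-|]; [lra|].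
  left. apply iota_lt; lra.
Qed.

Lemma iota_range k x : 0 <= x <= 1 -> 0 <= iota k x <= 1.
Proof.
  destruct (iota_PL k) as [H0 [H1 _]]. intros Hx.
  rewrite <- H0, <- H1 at 1. split; apply iota_le; lra.
Qed.

Lemma iota_lt_iff k x y : 0 <= x <= 1 -> 0 <= y <= 1 -> iota k x < iota k y <-> x < y.
Proof.
  intros Hx Hy. split; [|intros; apply iota_lt; lra].
  intros Hlt. apply Rnot_le_lt. intro Hyx. pose proof (iota_le k y x). lra.
Qed.

Lemma iota_inj k x y : 0 <= x <= 1 -> 0 <= y <= 1 -> iota k x = iota k y -> x = y.
Proof.
  intros Hx Hy Heq. destruct (Rtotal_order x y) as [Hlt|[Heq'|Hlt]]; [|exact Heq'|].
  - apply (iota_lt_iff k) in Hlt; lra.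
  - apply (iota_lt_iff k) in Hlt; lra.
Qed.

Lemma iota_one x : 0 <= x <= 1 -> iota gone x = x.
Proof.
  intros Hx. apply (iota_inj gone); [now apply iota_range | exact Hx |].
  now rewrite <- iota_mul, gmul_1l.
Qed.

Lemma iota_invK k x : 0 <= x <= 1 -> iota (ginv k) (iota k x) = x.
Proof. intros Hx. now rewrite <- iota_mul, gmul_Vl, iota_one. Qed.

Lemma iota_Kinv k x : 0 <= x <= 1 -> iota k (iota (ginv k) x) = x.
Proof. intros Hx. now rewrite <- iota_mul, gmul_Vr, iota_one. Qed.

Lemma iota_gconj g k x :
  0 <= x <= 1 -> iota (gconj K g k) x = iota g (iota k (iota (ginv g) x)).
Proof.
  intros Hx. unfold gconj.
  rewrite !iota_mul; auto; apply iota_range; auto.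
Qed.

Lemma moves_inv k x : 0 <= x <= 1 -> iota (ginv k) x <> x -> iota k x <> x.
Proof. intros Hx Hmove Hfix. apply Hmove. rewrite <- Hfix at 1. now apply iota_invK. Qed.

Lemma moves_mul g h x :
  0 <= x <= 1 -> iota (gmul g h) x <> x -> iota g x <> x \/ iota h x <> x.
Proof.
  intros Hx Hmove. rewrite iota_mul in Hmove by exact Hx.
  destruct (Req_dec (iota h x) x) as [Hfix|]; [rewrite Hfix in Hmove|]; auto.
Qed.

Lemma moves_gconj g k x :
  0 <= x <= 1 -> iota (gconj K g k) x <> x ->
  iota k (iota (ginv g) x) <> iota (ginv g) x.
Proof.
  intros Hx Hmove Hfix. apply Hmove.
  now rewrite iota_gconj, Hfix, iota_Kinv.
Qed.

Definition global_fixed z := forall k, iota k z = z.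

(* y lies in the component of p, i.e. of the support of K. *)
Definition same_component p y :=
  0 <= y <= 1 /\ forall z, (p <= z <= y \/ y <= z <= p) -> ~ global_fixed z.

Lemma same_component_range p y : same_component p y -> 0 <= y <= 1.
Proof. now intros [Hy _]. Qed.

Lemma same_component_not_fixed p y : same_component p y -> ~ global_fixed y.
Proof. intros [_ H]. apply H. destruct (Rle_dec p y); [left|right]; lra. Qed.

Lemma same_component_refl p y : same_component p y -> same_component p p.
Proof.
  intros [Hy H]. assert (Hp : 0 <= p <= 1).
  { split; apply Rnot_lt_le; intro.
    - apply (H 0); [left; lra | intro k; apply iota_PL].
    - apply (H 1); [right; lra | intro k; apply iota_PL]. }
  split; [exact Hp|]. intros z Hz. apply H. destruct (Rle_dec p y); [left|right]; lra.
Qed.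

Lemma same_component_between p c d y :
  same_component p c -> same_component p d -> c <= y <= d -> same_component p y.
Proof.
  intros [Hc Hcz] [Hd Hdz] Hy. split; [lra|]. intros z Hz.
  destruct Hz; [apply Hdz; left | apply Hcz; right]; lra.
Qed.

Lemma same_component_iota p y k : same_component p y -> same_component p (iota k y).
Proof.
  intros Hcomp. destruct (same_component_refl _ _ Hcomp) as [Hp _].
  destruct Hcomp as [Hy Hyz]. pose proof (iota_range k y Hy).
  split; [lra|]. intros z Hz Hfix.
  assert (Hyz' : y <> z)
    by (intros <-; apply (Hyz y); [destruct (Rle_dec p y); [left|right]; lra | exact Hfix]).
  (* iota k preserves the sides of the fixed point z, so z already separates p from y *)
  destruct (Rlt_or_le y z) as [Hlt|Hle].
  - pose proof (iota_lt k y z ltac:(lra) Hlt ltac:(lra)) as Hky. rewrite (Hfix k) in Hky.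
    apply (Hyz z); [right; lra | exact Hfix].
  - pose proof (iota_lt k z y ltac:(lra) ltac:(lra) ltac:(lra)) as Hky. rewrite (Hfix k) in Hky.
    apply (Hyz z); [left; lra | exact Hfix].
Qed.


Lemma glb_invariant_fixed (S : R -> Prop) a :
  (forall k y, S y -> S (iota k y)) -> (forall y, S y -> 0 <= y <= 1) -> 0 <= a <= 1 ->
  (forall y, S y -> a <= y) -> (forall c, a < c -> exists y, S y /\ y < c) ->
  global_fixed a.
Proof.
  intros Hinv HS Ha Hlow Happ.
  assert (Hdown : forall k, iota k a <= a).
  { intro k. apply Rnot_lt_le. intro Hlt. destruct (Happ _ Hlt) as [y [Hy Hya]].
    pose proof (HS y Hy). pose proof (Hlow _ (Hinv (ginv k) y Hy)).
    assert (iota (ginv k) y < a); [|lra].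
    apply (iota_lt_iff k); [now apply iota_range | exact Ha | now rewrite iota_Kinv]. }
  intro k. apply Rle_antisym; [apply Hdown|].
  rewrite <- (iota_Kinv k a) at 1 by exact Ha.
  apply iota_le; [apply iota_range; exact Ha | apply Hdown | lra].
Qed.

Lemma lub_invariant_fixed (S : R -> Prop) b :
  (forall k y, S y -> S (iota k y)) -> (forall y, S y -> 0 <= y <= 1) -> 0 <= b <= 1 ->
  (forall y, S y -> y <= b) -> (forall c, c < b -> exists y, S y /\ c < y) ->
  global_fixed b.
Proof.
  intros Hinv HS Hb Hup Happ.
  assert (Hup' : forall k, b <= iota k b).
  { intro k. apply Rnot_lt_le. intro Hlt. destruct (Happ _ Hlt) as [y [Hy Hby]].
    pose proof (HS y Hy). pose proof (Hup _ (Hinv (ginv k) y Hy)).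
    assert (b < iota (ginv k) y); [|lra].
    apply (iota_lt_iff k); [exact Hb | now apply iota_range | now rewrite iota_Kinv]. }
  intro k. apply Rle_antisym; [|apply Hup'].
  rewrite <- (iota_Kinv k b) at 2 by exact Hb.
  apply iota_le; [lra | apply Hup' | apply iota_range; exact Hb].
Qed.

Lemma component_lower_end p :
  same_component p p ->
  exists a, global_fixed a /\ 0 <= a < p /\ (forall y, same_component p y -> a <= y) /\
    (forall c, a < c -> exists y, same_component p y /\ y < c).
Proof.
  intros Hp. pose proof (same_component_range _ _ Hp).
  destruct (exists_glb (same_component p) 0) as [a [Ha0 [Hlow Happ]]].
  - now exists p.
  - intros y Hy. now apply same_component_range in Hy.
  - pose proof (Hlow p Hp).
    assert (Hfix : global_fixed a).
    { apply (glb_invariant_fixed (same_component p)); auto; [| |lra].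
      - intros k y. apply same_component_iota.
      - apply same_component_range. }
    exists a. repeat split; auto.
    destruct (Req_dec a p) as [<-|]; [|lra].
    now apply same_component_not_fixed in Hp.
Qed.

Lemma component_upper_end p :
  same_component p p ->
  exists b, global_fixed b /\ p < b <= 1 /\ (forall y, same_component p y -> y <= b) /\
    (forall c, c < b -> exists y, same_component p y /\ c < y).
Proof.
  intros Hp. pose proof (same_component_range _ _ Hp).
  destruct (exists_lub (same_component p) 1) as [b [Hb1 [Hup Happ]]].
  - now exists p.
  - intros y Hy. now apply same_component_range in Hy.
  - pose proof (Hup p Hp).
    assert (Hfix : global_fixed b).
    { apply (lub_invariant_fixed (same_component p)); auto; [| |lra].
      - intros k y. apply same_component_iota.
      - apply same_component_range. }
    exists b. repeat split; auto.
    destruct (Req_dec p b) as [->|]; [|lra].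
    now apply same_component_not_fixed in Hp.
Qed.

(* The orbit of c is K-invariant, so its supremum is a global fixed point, which cannot lie in the component. *)
Lemma component_displace p c d :
  same_component p c -> same_component p d -> exists g, d < iota g c.
Proof.
  intros Hc Hd. apply NNPP. intro Hno.
  pose proof (same_component_range _ _ Hc). pose proof (same_component_range _ _ Hd).
  set (orbit := fun y => exists g, y = iota g c).
  destruct (exists_lub orbit d) as [s [Hsd [Hup Happ]]].
  - exists c, gone. now rewrite iota_one.
  - intros y [g ->]. apply Rnot_lt_le. intro. apply Hno. now exists g.
  - assert (Hcs : c <= s) by (apply Hup; exists gone; now rewrite iota_one).
    apply (same_component_not_fixed p s); [now apply (same_component_between p c d)|].
    apply (lub_invariant_fixed orbit); auto; [| |lra].
    + intros k y [g ->]. exists (gmul k g). now rewrite iota_mul.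
    + intros y [g ->]. now apply iota_range.
Qed.


(* s = 1 or s = -1 selects the side of a. *)
Definition dilates k a s al ep :=
  forall u, 0 <= u <= ep -> 0 <= a + s * u <= 1 /\ iota k (a + s * u) = a + s * (al * u).

Lemma exists_dilation k a s :
  global_fixed a -> (s = 1 /\ 0 <= a < 1) \/ (s = -1 /\ 0 < a <= 1) ->
  exists al ep, 0 < al /\ 0 < ep /\ dilates k a s al ep.
Proof.
  intros Hfix [[-> Ha]|[-> Ha]].
  - destruct (PL_affine_right _ a (iota_PL k) Ha) as [r [al [be [Hr [Hal Hf]]]]].
    assert (Hfa : iota k a = al * a + be) by (apply Hf; lra). rewrite (Hfix k) in Hfa.
    exists al, (r - a). repeat split; try lra. rewrite Hf; lra.
  - destruct (PL_affine_left _ a (iota_PL k) Ha) as [l [al [be [Hl [Hal Hf]]]]].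
    assert (Hfa : iota k a = al * a + be) by (apply Hf; lra). rewrite (Hfix k) in Hfa.
    exists al, (a - l). repeat split; try lra. rewrite Hf; lra.
Qed.

Lemma dilates_mul g h a s al be e1 e2 :
  0 < be -> 0 < e1 -> 0 < e2 -> dilates g a s al e1 -> dilates h a s be e2 ->
  exists ep, 0 < ep /\ dilates (gmul g h) a s (al * be) ep.
Proof.
  intros Hbe He1 He2 Hg Hh.
  exists (Rmin e2 (e1 / be)). split.
  { apply Rmin_glb_lt; [lra | apply Rdiv_lt_0_compat; lra]. }
  intros u Hu. pose proof (Rmin_l e2 (e1 / be)). pose proof (Rmin_r e2 (e1 / be)).
  destruct (Hh u) as [Hrange Hhu]; [lra|]. split; [exact Hrange|].
  assert (Hbu : be * u <= e1).
  { replace e1 with (be * (e1 / be)) by (field; lra). apply Rmult_le_compat_l; lra. }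
  rewrite iota_mul, Hhu by exact Hrange.
  rewrite (proj2 (Hg (be * u) ltac:(split; [apply Rmult_le_pos|]; lra))). ring.
Qed.

Lemma dilates_slope_unique k a s al al' e e' :
  s <> 0 -> 0 < e -> 0 < e' -> dilates k a s al e -> dilates k a s al' e' -> al = al'.
Proof.
  intros Hs He He' H H'. set (u := Rmin e e').
  assert (Hu : 0 < u) by (apply Rmin_glb_lt; lra).
  destruct (H u) as [_ Hk]; [split; [lra | apply Rmin_l]|].
  destruct (H' u) as [_ Hk']; [split; [lra | apply Rmin_r]|].
  assert (Hprod : (s * u) * (al - al') = 0) by lra.
  apply Rmult_integral in Hprod as [Hsu|]; [|lra].
  apply Rmult_integral in Hsu as [|]; lra.
Qed.

Lemma dilates_inv_slope k a s al be e1 e2 :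
  s <> 0 -> 0 < be -> 0 < e1 -> 0 < e2 ->
  dilates k a s al e1 -> dilates (ginv k) a s be e2 -> al * be = 1.
Proof.
  intros Hs Hbe He1 He2 Hk Hk'.
  destruct (dilates_mul k (ginv k) a s al be e1 e2) as [ep [Hep Hprod]]; auto.
  rewrite gmul_Vr in Hprod.
  apply (dilates_slope_unique gone a s _ _ ep ep); auto.
  intros u Hu. destruct (Hprod u Hu) as [Hrange _]. split; [exact Hrange|].
  rewrite iota_one by exact Hrange. ring.
Qed.

(* The dilation ratio at a is multiplicative with values in an abelian group. *)
Lemma gcomm_fixed_near_fixed_point k h a s :
  global_fixed a -> (s = 1 /\ 0 <= a < 1) \/ (s = -1 /\ 0 < a <= 1) ->
  exists ep, 0 < ep /\ forall u, 0 <= u <= ep -> iota (gcomm K k h) (a + s * u) = a + s * u.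
Proof.
  intros Hfix Hside. assert (Hs : s <> 0) by (destruct Hside as [[-> _]|[-> _]]; lra).
  destruct (exists_dilation k a s Hfix Hside) as [al1 [e1 [Hal1 [He1 Hk]]]].
  destruct (exists_dilation h a s Hfix Hside) as [al2 [e2 [Hal2 [He2 Hh]]]].
  destruct (exists_dilation (ginv k) a s Hfix Hside) as [be1 [f1 [Hbe1 [Hf1 Hk']]]].
  destruct (exists_dilation (ginv h) a s Hfix Hside) as [be2 [f2 [Hbe2 [Hf2 Hh']]]].
  destruct (dilates_mul _ _ a s _ _ _ _ Hal2 He1 He2 Hk Hh) as [e3 [He3 H3]].
  destruct (dilates_mul _ _ a s _ _ _ _ Hbe1 He3 Hf1 H3 Hk') as [e4 [He4 H4]].
  destruct (dilates_mul _ _ a s _ _ _ _ Hbe2 He4 Hf2 H4 Hh') as [ep [Hep Hcomm]].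
  pose proof (dilates_inv_slope k a s _ _ _ _ Hs Hbe1 He1 Hf1 Hk Hk').
  pose proof (dilates_inv_slope h a s _ _ _ _ Hs Hbe2 He2 Hf2 Hh Hh').
  replace (al1 * al2 * be1 * be2) with 1 in Hcomm by nra.
  exists ep. split; [exact Hep|]. intros u Hu. unfold gcomm. rewrite (proj2 (Hcomm u Hu)). ring.
Qed.


Definition support_within p c d k :=
  forall x, same_component p x -> iota k x <> x -> c <= x <= d.

Definition compact_support k :=
  forall p, same_component p p ->
    exists c d, same_component p c /\ same_component p d /\ support_within p c d k.

Lemma support_within_mul p c d g h :
  support_within p c d g -> support_within p c d h -> support_within p c d (gmul g h).
Proof.
  intros Hg Hh x Hx Hmove.
  destruct (moves_mul g h x (same_component_range _ _ Hx) Hmove); auto.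
Qed.

Lemma support_within_gconj p c d g k :
  0 <= c <= 1 -> 0 <= d <= 1 -> support_within p c d k ->
  support_within p (iota g c) (iota g d) (gconj K g k).
Proof.
  intros Hc Hd Hk x Hx Hmove. pose proof (same_component_range _ _ Hx).
  apply moves_gconj in Hmove; [|lra].
  destruct (Hk _ (same_component_iota _ _ (ginv g) Hx) Hmove) as [Hcy Hyd].
  rewrite <- (iota_Kinv g x) by lra.
  pose proof (iota_range (ginv g) x ltac:(lra)).
  split; apply iota_le; lra.
Qed.

Lemma compact_support_list p (ks : list K) :
  same_component p p -> (forall k, In k ks -> compact_support k) ->
  exists c d, same_component p c /\ same_component p d /\
    forall k, In k ks -> support_within p c d k.
Proof.
  intros Hp. induction ks as [|k ks IH]; intros Hks.
  - exists p, p. split; [exact Hp|split; [exact Hp | intros _ []]].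
  - destruct IH as [c [d [Hc [Hd Hall]]]]; [intros; apply Hks; now right|].
    destruct (Hks k (or_introl eq_refl) p Hp) as [c1 [d1 [Hc1 [Hd1 Hk]]]].
    pose proof (Rmin_l c c1). pose proof (Rmin_r c c1).
    pose proof (Rmax_l d d1). pose proof (Rmax_r d d1).
    exists (Rmin c c1), (Rmax d d1). split; [|split].
    + now apply Rmin_case.
    + now apply Rmax_case.
    + intros k' [<-|Hk'] x Hx Hmove.
      * destruct (Hk x Hx Hmove). lra.
      * destruct (Hall k' Hk' x Hx Hmove). lra.
Qed.

Lemma compact_support_one : compact_support gone.
Proof.
  intros p Hp. exists p, p. split; [exact Hp|split; [exact Hp|]].
  intros x Hx Hmove. contradict Hmove. apply iota_one, (same_component_range p), Hx.
Qed.

Lemma compact_support_mul g h : compact_support g -> compact_support h -> compact_support (gmul g h).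
Proof.
  intros Hg Hh p Hp.
  destruct (compact_support_list p (g :: h :: nil) Hp) as [c [d [Hc [Hd Hall]]]].
  - intros k [<-|[<-|[]]]; auto.
  - exists c, d. split; [exact Hc|split; [exact Hd|]].
    apply support_within_mul; apply Hall; simpl; auto.
Qed.

Lemma compact_support_inv k : compact_support k -> compact_support (ginv k).
Proof.
  intros Hk p Hp. destruct (Hk p Hp) as [c [d [Hc [Hd Hsupp]]]].
  exists c, d. split; [exact Hc|split; [exact Hd|]]. intros x Hx Hmove.
  apply Hsupp; [exact Hx|]. apply moves_inv; [apply (same_component_range p x Hx) | exact Hmove].
Qed.

Lemma compact_support_gconj g k : compact_support k -> compact_support (gconj K g k).
Proof.
  intros Hk p Hp. destruct (Hk p Hp) as [c [d [Hc [Hd Hsupp]]]].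
  exists (iota g c), (iota g d). split; [|split]; try now apply same_component_iota.
  apply support_within_gconj; auto; eapply same_component_range; eauto.
Qed.

(* The ends of a component are global fixed points, near which commutators are trivial. *)
Lemma compact_support_gcomm k h : compact_support (gcomm K k h).
Proof.
  intros p Hp. pose proof (same_component_range _ _ Hp).
  destruct (component_lower_end p Hp) as [a [Ha [Hap [Hlow Happ_a]]]].
  destruct (component_upper_end p Hp) as [b [Hb [Hpb [Hup Happ_b]]]].
  destruct (gcomm_fixed_near_fixed_point k h a 1 Ha) as [e1 [He1 Fix1]]; [left; lra|].
  destruct (gcomm_fixed_near_fixed_point k h b (-1) Hb) as [e2 [He2 Fix2]]; [right; lra|].
  pose proof (Rmin_l (a + e1) p). pose proof (Rmin_r (a + e1) p).
  pose proof (Rmax_l (b - e2) p). pose proof (Rmax_r (b - e2) p).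
  exists (Rmin (a + e1) p), (Rmax (b - e2) p). split; [|split].
  - destruct (Happ_a (Rmin (a + e1) p)) as [y [Hy Hyc]]; [apply Rmin_glb_lt; lra|].
    apply (same_component_between p y p); auto; lra.
  - destruct (Happ_b (Rmax (b - e2) p)) as [y [Hy Hyc]]; [apply Rmax_lub_lt; lra|].
    apply (same_component_between p p y); auto; lra.
  - intros x Hx Hmove. pose proof (Hlow x Hx). pose proof (Hup x Hx).
    split; apply Rnot_lt_le; intro; apply Hmove.
    + replace x with (a + 1 * (x - a)) by ring. apply Fix1. lra.
    + replace x with (b + -1 * (b - x)) by ring. apply Fix2. lra.
Qed.


Lemma support_in_components k :
  exists P : list R, forall x, 0 <= x <= 1 -> iota k x <> x ->
    exists p, In p P /\ same_component p x.
Proof.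
  destruct (PL_support_cover _ (iota_PL k)) as [P HP]. exists P.
  intros x Hx Hmove. destruct (HP x Hx Hmove) as [p [Hp Hside]].
  exists p. split; [exact Hp|]. split; [exact Hx|].
  intros z Hz Hfix.
  destruct Hside as [[Hpx Hs]|[Hpx Hs]]; (apply (Hs z); [destruct Hz; lra | apply Hfix]).
Qed.

Definition supported_in (P : list R) k :=
  compact_support k /\
  forall x, 0 <= x <= 1 -> iota k x <> x -> exists p, In p P /\ same_component p x.

Lemma is_normal_supported_in P : is_normal K (supported_in P).
Proof.
  split; [split; [|split]|].
  - split; [apply compact_support_one|]. intros x Hx Hmove. contradict Hmove. now apply iota_one.
  - intros g h [Hg Sg] [Hh Sh]. split; [now apply compact_support_mul|].
    intros x Hx Hmove. destruct (moves_mul g h x Hx Hmove); auto.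
  - intros k [Hk Sk]. split; [now apply compact_support_inv|].
    intros x Hx Hmove. apply Sk; [exact Hx | now apply moves_inv].
  - intros g k [Hk Sk]. split; [now apply compact_support_gconj|]. intros x Hx Hmove.
    destruct (Sk _ (iota_range (ginv g) x Hx) (moves_gconj g k x Hx Hmove)) as [p [Hp Hcomp]].
    exists p. split; [exact Hp|].
    rewrite <- (iota_Kinv g x) by exact Hx. now apply same_component_iota.
Qed.

Lemma supported_in_gcomm k h : exists P, supported_in P (gcomm K k h).
Proof.
  destruct (support_in_components (gcomm K k h)) as [P HP].
  exists P. split; [apply compact_support_gcomm | exact HP].
Qed.

Lemma supported_in_nil k : supported_in nil k -> k = gone.
Proof.
  intros [_ Sk]. apply iota_ext. intros x Hx. rewrite iota_one by exact Hx.
  apply NNPP. intro Hmove. now destruct (Sk x Hx Hmove) as [p [[] _]].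
Qed.

Lemma supported_in_drop p P k :
  supported_in (p :: P) k -> (forall x, same_component p x -> iota k x = x) -> supported_in P k.
Proof.
  intros [Hk Sk] Hfix. split; [exact Hk|]. intros x Hx Hmove.
  destruct (Sk x Hx Hmove) as [q [[<-|Hq] Hcomp]]; [|now exists q].
  contradict Hmove. now apply Hfix.
Qed.

Lemma iota_commute_of_disjoint_support (S : R -> Prop) g h :
  (forall k y, S y -> S (iota k y)) -> (forall y, S y -> 0 <= y <= 1) ->
  (forall y, S y -> iota g y <> y -> iota h y = y) ->
  forall y, S y -> iota g (iota h y) = iota h (iota g y).
Proof.
  intros Hinv HS Hdisj y Hy. pose proof (HS y Hy).
  destruct (Req_dec (iota g y) y) as [Hgy|Hgy].
  - rewrite Hgy. apply NNPP. intro Hghy.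
    assert (Hhy : iota h y = y).
    { apply (iota_inj h); [now apply iota_range | exact H |].
      apply Hdisj; [now apply Hinv | exact Hghy]. }
    apply Hghy. now rewrite Hhy.
  - rewrite (Hdisj y Hy Hgy). symmetry. apply Hdisj; [now apply Hinv|].
    intro Hggy. apply Hgy, (iota_inj g); auto.
Qed.

Lemma gcomm_fixed_of_commute (S : R -> Prop) g h :
  (forall k y, S y -> S (iota k y)) -> (forall y, S y -> 0 <= y <= 1) ->
  (forall y, S y -> iota g (iota h y) = iota h (iota g y)) ->
  forall x, S x -> iota (gcomm K g h) x = x.
Proof.
  intros Hinv HS Hcomm x Hx. pose proof (HS x Hx).
  set (z := iota (ginv g) (iota (ginv h) x)).
  assert (Hz : S z) by (apply Hinv, Hinv, Hx).
  unfold gcomm. rewrite !iota_mul by (repeat apply iota_range; auto).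
  fold z. rewrite Hcomm by exact Hz. unfold z.
  now rewrite iota_Kinv, iota_Kinv by (try apply iota_range; auto).
Qed.

(* If g pushes c past d, the supports of ka^g and kb inside the component are disjoint. *)
Lemma gcomm_displaced_fixes p c d g ka kb :
  same_component p c -> same_component p d -> d < iota g c ->
  support_within p c d ka -> support_within p c d kb ->
  forall x, same_component p x -> iota (gcomm K (gconj K g ka) kb) x = x.
Proof.
  intros Hc Hd Hg Ha Hb.
  assert (Hinv : forall k y, same_component p y -> same_component p (iota k y))
    by (intros k y; apply same_component_iota).
  apply (gcomm_fixed_of_commute _ _ _ Hinv (same_component_range p)).
  apply (iota_commute_of_disjoint_support _ _ _ Hinv (same_component_range p)).
  intros y Hy Hmove. apply NNPP. intro Hmove'.
  destruct (support_within_gconj p c d g ka (same_component_range _ _ Hc)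
    (same_component_range _ _ Hd) Ha y Hy Hmove).
  destruct (Hb y Hy Hmove'). lra.
Qed.


Variables (G : Grp) (pi : K -> G).
Hypothesis Hpi : is_hom K G pi.

Lemma exists_minimal_components :
  (exists P k, supported_in P k /\ pi k <> gone) ->
  exists p P k0, same_component p p /\ supported_in (p :: P) k0 /\ pi k0 <> gone /\
    forall k, supported_in P k -> pi k = gone.
Proof.
  intros Hex.
  set (Q := fun n => exists P k, length P = n /\ supported_in P k /\ pi k <> gone).
  destruct (dec_inh_nat_subset_has_unique_least_element Q) as [n [[HQ Hleast] _]].
  - intro n. apply classic.
  - destruct Hex as [P [k Hk]]. now exists (length P), P, k.
  - destruct HQ as [[|p P] [k0 [Hlen [Hk0 Hpik0]]]].
    + exfalso. apply Hpik0. rewrite (supported_in_nil k0 Hk0). now apply hom_one.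
    + assert (Hmin : forall k, supported_in P k -> pi k = gone).
      { intros k Hk. apply NNPP. intro Hpik.
        assert (Hlt : (n <= length P)%nat) by (apply Hleast; now exists P, k).
        simpl in Hlen. lia. }
      exists p, P, k0. split; [|split; [exact Hk0 | split; [exact Hpik0 | exact Hmin]]].
      apply NNPP. intro Hp. apply Hpik0, Hmin.
      apply (supported_in_drop p); [exact Hk0|].
      intros x Hx. exfalso. now apply Hp, (same_component_refl p x).
Qed.

Lemma conj_centralize_in_image p P (A B : G -> Prop) :
  same_component p p -> (forall k, supported_in P k -> pi k = gone) ->
  (forall a, A a -> image K G pi (supported_in (p :: P)) a) ->
  (forall b, B b -> image K G pi (supported_in (p :: P)) b) ->
  fin_gen_subgroup G A -> fin_gen_subgroup G B ->
  exists z : G, conj_centralize G z A B.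
Proof.
  intros Hp Hmin HA HB [lA HlA] [lB HlB].
  destruct (image_list K G pi (supported_in (p :: P)) (lA ++ lB)) as [ks [Hks Hlift]].
  { intros z Hz. apply in_app_or in Hz as [Hz|Hz]; [apply HA, HlA | apply HB, HlB];
      intros S _ HS; now apply HS. }
  destruct (compact_support_list p ks Hp) as [c [d [Hc [Hd Hsupp]]]].
  { intros k Hk. apply Hks, Hk. }
  destruct (component_displace p c d Hc Hd) as [g Hg].
  exists (pi g). apply (conj_centralize_of_generators G (pi g) lA lB A B HlA HlB).
  intros a b Ha Hb.
  destruct (Hlift a (in_or_app _ _ _ (or_introl Ha))) as [ka [Hka <-]].
  destruct (Hlift b (in_or_app _ _ _ (or_intror Hb))) as [kb [Hkb <-]].
  apply commute_of_gcomm. rewrite <- hom_gconj, <- hom_gcomm by exact Hpi. apply Hmin.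
  pose proof (is_normal_supported_in (p :: P)) as [Hsub Hnormal].
  apply (supported_in_drop p).
  - apply is_subgroup_gcomm; [exact Hsub | apply Hnormal, Hks, Hka | apply Hks, Hkb].
  - apply (gcomm_displaced_fixes p c d); auto.
Qed.

End PLGroup.

Theorem lemma4p7 (G : Grp) :
  fin_gen_group G -> in_QPLO G -> (exists g : G, g <> gone) ->
  exists H : G -> Prop,
    is_normal G H /\ (exists h, H h /\ h <> gone) /\
    forall A B : G -> Prop,
      is_subgroup G A -> is_subgroup G B ->
      (forall a, A a -> H a) -> (forall b, B b -> H b) ->
      fin_gen_subgroup G A -> fin_gen_subgroup G B ->
      exists g : G, conj_centralize G g A B.
Proof.
  intros _ [K [pi [[iota HE] [Hpi Hsurj]]]] [g1 Hg1].
  destruct (classic (forall x y : G, commute G x y)) as [Habel|Hnonabel].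
  - exists (fun _ => True). split; [repeat split; auto|]. split; [now exists g1|].
    intros A B _ _ _ _ _ _. exists gone. intros a b _ _. apply Habel.
  - apply not_all_ex_not in Hnonabel as [x Hx]. apply not_all_ex_not in Hx as [y Hxy].
    destruct (Hsurj x) as [k1 <-], (Hsurj y) as [k2 <-].
    destruct (exists_minimal_components K iota HE G pi Hpi) as [p [P [k0 [Hp [Hk0 [Hpik0 Hmin]]]]]].
    { destruct (supported_in_gcomm K iota HE k1 k2) as [P HP].
      exists P, (gcomm K k1 k2). split; [exact HP|].
      rewrite hom_gcomm by exact Hpi. intro Hone. now apply Hxy, commute_of_gcomm. }
    exists (image K G pi (supported_in K iota (p :: P))). split; [|split].
    + apply is_normal_image; [exact Hpi | exact Hsurj | apply is_normal_supported_in, HE].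
    + exists (pi k0). split; [now exists k0 | exact Hpik0].
    + intros A B _ _ HA HB. now apply (conj_centralize_in_image K iota HE G pi Hpi p P).
Qed.
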